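(* Let $(R,\omega_\Omega,\alpha)$ be a represented system for an arbitrary group $G$. Let $B$ be the set of all eigenoperators of $\alpha$ together with the zero operator, let $C$ be the $*$-algebra generated by $B$, and set $N:=C''$. Then $(N,\omega_\Omega,\alpha)$ is a compact factor of $(R,\omega_\Omega,\alpha)$; that is, $\alpha_g(N)\subset N$ for all $g\in G$, and for every $a\in N$ the orbit $\{\alpha_g(a):g\in G\}$ is totally bounded with respect to $\|\cdot\|_\Omega$.
   Context: A represented system $(R,\omega_\Omega,\alpha)$ consists of a von Neumann algebra $R$ on a Hilbert space $H$, a unit vector $\Omega\in H$ cyclic and separating for $R$, the state $\omega_\Omega(a)=\langle\Omega,a\Omega\rangle$ on $R$, and a unitary representation $g\mapsto U_g$ of a group $G$ on $H$ with $U_g\Omega=\Omega$ and $U_gRU_g^*\subset R$ for all $g$, with $\alpha_g(a):=U_gaU_g^*$. An eigenoperator of $\alpha$ is an $a\in R\setminus\{0\}$ for which there is a function $\lambda_a:G\to\mathbb{C}$ with $\alpha_g(a)=\lambda_a(g)a$ for all $g$. $\|a\|_\Omega:=\omega_\Omega(a^*a)^{1/2}=\|a\Omega\|$. $S'$ denotes the commutant of $S\subset B(H)$. A factor of $(R,\omega_\Omega,\alpha)$ consists of a $*$-subalgebra $N\subset R$ with $\alpha_g(N)\subset N$ for all $g$ together with the restrictions of $\omega_\Omega$ and $\alpha_g$. *)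

From HB Require Import structures.
From mathcomp Require Import all_boot all_order all_algebra.

From mathcomp Require Import reals.
From mathcomp Require Import complex.
From Stdlib Require Import ClassicalEpsilon.
Set Implicit Arguments. Unset Strict Implicit. Unset Printing Implicit Defensive.
Import Order.TTheory GRing.Theory Num.Theory.
Local Open Scope ring_scope.

(* Hilbert spaces are modelled as a
   left module H over R[i] together with an inner product ip, linear in the
   second and conjugate-linear in the first argument (physics convention,
   matching omega(a) = <Omega, a Omega>). *)
Section Hilbert.
Variables (R : realType) (H : lmodType R[i]) (ip : H -> H -> R[i]).

Definition cconj (z : R[i]) : R[i] := Complex (@complex.Re R z) (- @complex.Im R z).

Definition hnorm (x : H) : R := Num.sqrt (@complex.Re R (ip x x)).

Definition is_hilbert : Prop :=
  [/\ (forall (a : R[i]) (x y z : H), ip x (a *: y + z) = a * ip x y + ip x z),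
      (forall x y : H, ip y x = cconj (ip x y)),
      (forall x : H, 0 <= @complex.Re R (ip x x)),
      (forall x : H, ip x x = 0 -> x = 0) &
      (forall u : nat -> H,
        (forall e : R, 0 < e -> exists N : nat, forall m n : nat,
            (N <= m)%N -> (N <= n)%N -> hnorm (u m - u n) < e) ->
        exists l : H, forall e : R, 0 < e -> exists N : nat, forall n : nat,
            (N <= n)%N -> hnorm (u n - l) < e)].

Definition linop (T : H -> H) : Prop :=
  forall (a : R[i]) (x y : H), T (a *: x + y) = a *: T x + T y.

Definition bounded_op (T : H -> H) : Prop :=
  linop T /\ exists M : R, forall x : H, hnorm (T x) <= M * hnorm x.

Definition is_adjoint (T S : H -> H) : Prop :=
  forall x y : H, ip (T x) y = ip x (S y).

(* The adjoint T^* (chosen by Hilbert's epsilon; unique for bounded T). *)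
Definition adj (T : H -> H) : H -> H :=
  epsilon (inhabits T) (fun S => bounded_op S /\ is_adjoint T S).

Definition zero_op : H -> H := fun _ => 0.
Definition add_op (S T : H -> H) : H -> H := fun x => S x + T x.
Definition scale_op (c : R[i]) (T : H -> H) : H -> H := fun x => c *: T x.

Definition commutant (S : (H -> H) -> Prop) : (H -> H) -> Prop :=
  fun T => bounded_op T /\ forall s, S s -> T \o s = s \o T.

Definition star_subalg (S : (H -> H) -> Prop) : Prop :=
  [/\ (forall a, S a -> bounded_op a),
      S zero_op,
      (forall a b, S a -> S b -> S (add_op a b)),
      (forall c a, S a -> S (scale_op c a)) &
      (forall a b, S a -> S b -> S (a \o b))] /\
      (forall a, S a -> S (adj a)).


Definition gen_star_alg (B : (H -> H) -> Prop) : (H -> H) -> Prop :=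
  fun T => forall S, star_subalg S -> (forall b, B b -> S b) -> S T.

Definition von_neumann (M : (H -> H) -> Prop) : Prop :=
  (forall a, M a -> M (adj a)) /\ (forall T, M T <-> commutant (commutant M) T).

Definition unitary (U : H -> H) : Prop :=
  [/\ bounded_op U, (forall x y, ip (U x) (U y) = ip x y) & (forall y, exists x, U x = y)].

Variable G : groupType.

Definition alpha (U : G -> H -> H) (g : G) (a : H -> H) : H -> H :=
  U g \o a \o adj (U g).

Definition represented_system (M : (H -> H) -> Prop) (Omega : H) (U : G -> H -> H) : Prop :=
  [/\ is_hilbert, von_neumann M, hnorm Omega = 1,
      (forall (x : H) (e : R), 0 < e -> exists a, M a /\ hnorm (x - a Omega) < e) &
      (forall a, M a -> a Omega = 0 -> a = zero_op)] /\
  [/\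
      (forall g, unitary (U g)),
      (forall g h, U (g * h)%g = U g \o U h),
      U 1%g = id,
      (forall g, U g Omega = Omega) &
      (forall g a, M a -> M (alpha U g a))].

Definition eigenoperator (M : (H -> H) -> Prop) (U : G -> H -> H) (a : H -> H) : Prop :=
  M a /\ a <> zero_op /\
  exists lam : G -> R[i], forall g, alpha U g a = scale_op (lam g) a.

(* Orbit {alpha_g(a)} totally bounded for ||b||_Omega = ||b Omega||:
   for every e > 0 it is covered by finitely many e-balls centred on it. *)
Definition orbit_totally_bounded (U : G -> H -> H) (Omega : H) (a : H -> H) : Prop :=
  forall e : R, 0 < e -> exists s : seq G, forall g : G,
    exists h, List.In h s /\ hnorm (alpha U g a Omega - alpha U h a Omega) < e.

End Hilbert.

(* Eigenoperators have unimodular eigenvalues, since U_g fixes the separating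
   vector Omega.  Hence eigenoperators and their adjoints map vectors with a
   totally bounded U-orbit to vectors of the same kind.  These vectors form a
   closed subspace V containing Omega, invariant under the *-algebra C generated
   by the eigenoperators, so the orthogonal projection P onto V lies in C'.
   Every a in N = C'' then commutes with P, whence a Omega = P (a Omega) lies in
   V; as alpha_g(a) Omega = U_g (a Omega), the orbit of a is totally bounded.
   That N is an alpha-invariant *-subalgebra of R is bicommutant bookkeeping
   from C ⊆ R and alpha_g(C) ⊆ C. *)

From HB Require Import structures.
From mathcomp Require Import all_boot all_order all_algebra.
From mathcomp Require Import reals complex classical_sets boolp.
From mathcomp Require Import ring lra.
From Stdlib Require Import ClassicalEpsilon.
Import Order.TTheory GRing.Theory Num.Theory.
Local Open Scope ring_scope.
Local Open Scope complex_scope.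

(** * Complex scalars and finite nets *)

Section ComplexFacts.
Context {R : realType}.
Implicit Types (a b z : R[i]) (r : R).
Local Notation Re := (@complex.Re R).
Local Notation Im := (@complex.Im R).
Local Notation normc := (@Normc.normc R).

Lemma cconjE z : cconj z = z^*.
Proof. by case: z. Qed.

Lemma complex_ext a b : Re a = Re b -> Im a = Im b -> a = b.
Proof. by case: a => ? ?; case: b => ? ? /= -> ->. Qed.

Lemma Re_realM r z : Re (r%:C * z) = r * Re z.
Proof. by case: z => ? ? /=; rewrite mul0r subr0. Qed.

Lemma ReJ z : Re z^* = Re z.
Proof. by case: z. Qed.

Lemma ImJ z : Im z^* = - Im z.
Proof. by case: z. Qed.

Lemma normc_conj z : normc z^* = normc z.
Proof. by case: z => ? ? /=; rewrite sqrrN. Qed.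

Lemma normcR r : normc r%:C = `|r|.
Proof. by rewrite /= expr0n addr0 sqrtr_sqr. Qed.

Lemma normc_sqr z : normc z ^+ 2 = Re z ^+ 2 + Im z ^+ 2.
Proof. by case: z => ? ? /=; rewrite sqr_sqrtr // addr_ge0 ?sqr_ge0. Qed.

Lemma normc_ge0 z : 0 <= normc z.
Proof. by case: z => ? ? /=; rewrite sqrtr_ge0. Qed.

Lemma ler_normc_Re z : `|Re z| <= normc z.
Proof.
rewrite -ler_sqr ?nnegrE ?normc_ge0 // normc_sqr real_normK ?num_real //.
by rewrite lerDl sqr_ge0.
Qed.

Lemma ler_normc_Im z : `|Im z| <= normc z.
Proof.
rewrite -ler_sqr ?nnegrE ?normc_ge0 // normc_sqr real_normK ?num_real //.
by rewrite lerDr sqr_ge0.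
Qed.

Lemma normc_le_ReIm z : normc z <= `|Re z| + `|Im z|.
Proof.
rewrite -ler_sqr ?nnegrE ?normc_ge0 ?addr_ge0 // normc_sqr sqrrD.
rewrite !real_normK ?num_real //.
have : 0 <= `|Re z| * `|Im z| *+ 2 by rewrite mulrn_wge0 // mulr_ge0.
lra.
Qed.

End ComplexFacts.

Section FiniteNets.
Context {R : realType}.
Local Notation Re := (@complex.Re R).
Local Notation Im := (@complex.Im R).
Local Notation normc := (@Normc.normc R).

Lemma finite_net_segment (a : R) (N : nat) {d : R} : 0 < d ->
  exists L : seq R, forall t, a <= t <= a + N%:R * d -> exists2 r, r \in L & `|t - r| <= d.
Proof.
move=> d0; elim: N => [|N [L hL]].
  exists [:: a] => t; rewrite mul0r addr0 -eq_le => /eqP <-.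
  by exists a; rewrite ?mem_head // subrr normr0 ltW.
exists ((a + N.+1%:R * d) :: L) => t /andP[ta tN].
have [tN'|Nt] := lerP t (a + N%:R * d).
  by have [r rL tr] := hL t (introT andP (conj ta tN')); exists r; rewrite ?inE ?rL ?orbT.
exists (a + N.+1%:R * d); rewrite ?mem_head //.
move: tN Nt; rewrite -natr1 mulrDl mul1r ler_norml => tN Nt.
by apply/andP; split; lra.
Qed.

Lemma finite_net_interval {d : R} : 0 < d ->
  exists L : seq R, forall t, `|t| <= 1 -> exists2 r, r \in L & `|t - r| <= d.
Proof.
move=> d0; set N := Num.Def.archi_bound (2 / d).
have [L hL] := finite_net_segment (-1) N d0.
exists L => t; rewrite ler_norml => /andP[t1 t2]; apply: hL.
have : 2 / d < N%:R by apply: archi_boundP; rewrite divr_ge0 ?ltW.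
rewrite ltr_pdivrMr // => dN; apply/andP; split; lra.
Qed.

Lemma finite_net_unit_disc {d : R} : 0 < d ->
  exists L : seq R[i], forall z, normc z <= 1 -> exists2 w, w \in L & normc (z - w) <= d.
Proof.
move=> d0; have [L hL] := finite_net_interval (divr_gt0 d0 (ltr0Sn R 1)).
exists [seq Complex x y | x <- L, y <- L] => z z1.
have [a aL za] := hL _ (le_trans (ler_normc_Re z) z1).
have [b bL zb] := hL _ (le_trans (ler_normc_Im z) z1).
exists (Complex a b); first exact: allpairs_f.
apply: le_trans (normc_le_ReIm _) _; rewrite !raddfB /=.
by move: za zb; move: `|Re z - a| `|Im z - b| => u v; lra.
Qed.

Lemma exists_small_factor {e A : R} : 0 < e -> 0 <= A ->
  exists2 d : R, 0 < d <= 1 & d * A < e.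
Proof.
move=> e0 A0; have eA : 0 < A + e + 1 by lra.
exists (e / (A + e + 1)); first by rewrite divr_gt0 //= ler_pdivrMr // mul1r; lra.
by rewrite mulrAC ltr_pdivrMr // ltr_pM2l //; lra.
Qed.

Lemma exists_inv_succ_lt {d : R} :
  0 < d -> exists N : nat, forall k, (N <= k)%N -> k.+1%:R^-1 < d.
Proof.
move=> d0; exists (Num.Def.archi_bound d^-1) => k hk.
have /archi_boundP dN : 0 <= d^-1 by rewrite invr_ge0 ltW.
rewrite invf_plt ?posrE ?ltr0Sn //; apply: (lt_le_trans dN).
by rewrite ler_nat (leq_trans hk).
Qed.

End FiniteNets.

(** * Inner product spaces and the projection theorem *)

Section HilbertSpace.
Context {R : realType} {H : lmodType R[i]} {ip : H -> H -> R[i]}.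
Hypothesis hH : is_hilbert ip.
Implicit Types (x y z : H) (a : R[i]).
Local Notation Re := (@complex.Re R).
Local Notation Im := (@complex.Im R).
Local Notation normc := (@Normc.normc R).
Local Notation "`‖ x ‖" := (hnorm ip x) (at level 0, x at level 99, format "`‖ x ‖").

Lemma ip_linear a x y z : ip x (a *: y + z) = a * ip x y + ip x z.
Proof. by case: hH. Qed.

Lemma ip0r x : ip x 0 = 0.
Proof.
have := ip_linear 1 x 0 0; rewrite scale1r addr0 mul1r => e.
by apply: (addrI (ip x 0)); rewrite addr0 -e.
Qed.

Lemma ipDr x y z : ip x (y + z) = ip x y + ip x z.
Proof. by have := ip_linear 1 x y z; rewrite scale1r mul1r. Qed.

Lemma ipZr x a y : ip x (a *: y) = a * ip x y.
Proof. by have := ip_linear a x y 0; rewrite !addr0 ip0r addr0. Qed.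

Lemma ipC x y : ip y x = (ip x y)^*.
Proof. by case: hH => _ -> _ _ _; rewrite cconjE. Qed.

Lemma ipDl x y z : ip (x + y) z = ip x z + ip y z.
Proof. by rewrite ipC ipDr rmorphD /= -!ipC. Qed.

Lemma ipZl x a y : ip (a *: x) y = a^* * ip x y.
Proof. by rewrite ipC ipZr rmorphM /= -ipC. Qed.

Lemma ip0l x : ip 0 x = 0.
Proof. by rewrite ipC ip0r rmorph0. Qed.

Lemma ipNr x y : ip x (- y) = - ip x y.
Proof. by rewrite -scaleN1r ipZr mulN1r. Qed.

Lemma ipNl x y : ip (- x) y = - ip x y.
Proof. by rewrite ipC ipNr rmorphN /= -ipC. Qed.

Lemma ipBr x y z : ip x (y - z) = ip x y - ip x z.
Proof. by rewrite ipDr ipNr. Qed.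

Lemma ipBl x y z : ip (x - y) z = ip x z - ip y z.
Proof. by rewrite ipDl ipNl. Qed.

Lemma Re_ipC x y : Re (ip y x) = Re (ip x y).
Proof. by rewrite ipC ReJ. Qed.

Lemma ip_self_eq0 x : ip x x = 0 -> x = 0.
Proof. by case: hH => _ _ _ + _; apply. Qed.

Lemma ip_inj_l x y : (forall z, ip x z = ip y z) -> x = y.
Proof.
move=> e; apply/eqP; rewrite -subr_eq0; apply/eqP/ip_self_eq0.
by rewrite ipBl e subrr.
Qed.

Lemma ip_inj_r x y : (forall z, ip z x = ip z y) -> x = y.
Proof. by move=> e; apply: ip_inj_l => z; rewrite ipC e -ipC. Qed.

Lemma hnorm_ge0 x : 0 <= `‖ x ‖.
Proof. exact: sqrtr_ge0. Qed.

Lemma sqr_hnorm x : `‖ x ‖ ^+ 2 = Re (ip x x).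
Proof. by rewrite sqr_sqrtr //; case: hH. Qed.

Lemma ip_selfE x : ip x x = (`‖ x ‖ ^+ 2)%:C.
Proof.
apply: complex_ext; first by rewrite sqr_hnorm.
have : Im (ip x x) = Im (ip x x)^* by rewrite -ipC.
rewrite ImJ /=; lra.
Qed.

Lemma hnorm_eq0 {x} : `‖ x ‖ = 0 -> x = 0.
Proof.
by move=> x0; apply: ip_self_eq0; rewrite ip_selfE x0 expr0n.
Qed.

Lemma hnorm0 : `‖ 0 ‖ = 0.
Proof. by rewrite /hnorm ip0r sqrtr0. Qed.

Lemma hnormZ a x : `‖ a *: x ‖ = normc a * `‖ x ‖.
Proof.
rewrite {1}/hnorm ipZl ipZr ip_selfE.
rewrite -{2}(ger0_norm (hnorm_ge0 x)) -sqrtr_sqr.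
case: a => u v /=; rewrite -sqrtrM ?addr_ge0 ?sqr_ge0 //.
by congr Num.sqrt; ring.
Qed.

Lemma hnormN x : `‖ - x ‖ = `‖ x ‖.
Proof. by rewrite /hnorm ipNl ipNr opprK. Qed.

Lemma hdistC x y : `‖ x - y ‖ = `‖ y - x ‖.
Proof. by rewrite -hnormN opprB. Qed.

Lemma hnormD_sqr x y :
  `‖ x + y ‖ ^+ 2 = `‖ x ‖ ^+ 2 + 2 * Re (ip x y) + `‖ y ‖ ^+ 2.
Proof. by rewrite !sqr_hnorm ipDl !ipDr !raddfD /= (Re_ipC x y); ring. Qed.

Lemma hnormB_sqr x y :
  `‖ x - y ‖ ^+ 2 = `‖ x ‖ ^+ 2 - 2 * Re (ip x y) + `‖ y ‖ ^+ 2.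
Proof. by rewrite hnormD_sqr hnormN ipNr raddfN /=; ring. Qed.

Lemma hnorm_parallelogram x y :
  `‖ x + y ‖ ^+ 2 + `‖ x - y ‖ ^+ 2 = 2 * `‖ x ‖ ^+ 2 + 2 * `‖ y ‖ ^+ 2.
Proof. by rewrite hnormD_sqr hnormB_sqr; ring. Qed.

Lemma hnormB_realZ_sqr x y (t : R) :
  `‖ x - t%:C *: y ‖ ^+ 2 = `‖ x ‖ ^+ 2 - 2 * t * Re (ip x y) + t ^+ 2 * `‖ y ‖ ^+ 2.
Proof.
rewrite hnormB_sqr hnormZ normcR exprMn real_normK ?num_real // ipZr Re_realM; ring.
Qed.

Lemma Re_ip_le x y : Re (ip x y) <= `‖ x ‖ * `‖ y ‖.
Proof.
have [y0|ny0] := eqVneq `‖ y ‖ 0.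
  by rewrite (hnorm_eq0 y0) ip0r mulr_ge0 // hnorm_ge0.
have Y0 : 0 < `‖ y ‖ ^+ 2 by rewrite exprn_gt0 // lt_neqAle eq_sym ny0 hnorm_ge0.
have XYc : Re (ip x y) ^+ 2 <= `‖ x ‖ ^+ 2 * `‖ y ‖ ^+ 2.
  have := sqr_ge0 (`‖ x - (Re (ip x y) / `‖ y ‖ ^+ 2)%:C *: y ‖).
  rewrite hnormB_realZ_sqr.
  move: (Re (ip x y)) (`‖ x ‖ ^+ 2) (`‖ y ‖ ^+ 2) Y0 => c X Y Y0 ge0.
  rewrite -subr_ge0; suff -> : X * Y - c ^+ 2 = (X - 2 * (c / Y) * c + (c / Y) ^+ 2 * Y) * Y.
    by rewrite mulr_ge0 // ltW.
  by field; rewrite gt_eqF.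
have := mulr_ge0 (hnorm_ge0 x) (hnorm_ge0 y).
move: XYc; rewrite -exprMn; move: (Re (ip x y)) (`‖ x ‖ * `‖ y ‖) => c P; nra.
Qed.

Lemma normr_Re_ip_le x y : `|Re (ip x y)| <= `‖ x ‖ * `‖ y ‖.
Proof.
rewrite ler_norml Re_ip_le andbT lerNl -raddfN /= -ipNr.
by rewrite -[X in _ <= _ * X]hnormN Re_ip_le.
Qed.

Lemma ler_hnormD x y : `‖ x + y ‖ <= `‖ x ‖ + `‖ y ‖.
Proof.
rewrite -ler_sqr ?nnegrE ?addr_ge0 ?hnorm_ge0 // hnormD_sqr sqrrD.
have := Re_ip_le x y; lra.
Qed.

Lemma ler_hdistD x y z : `‖ x - z ‖ <= `‖ x - y ‖ + `‖ y - z ‖.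
Proof. by rewrite -[x - z](subrKA y) ler_hnormD. Qed.

Definition hconverges (u : nat -> H) (x : H) : Prop :=
  forall e : R, 0 < e -> exists N : nat, forall k, (N <= k)%N -> `‖ u k - x ‖ < e.

Definition hcauchy (u : nat -> H) : Prop :=
  forall e : R, 0 < e -> exists N : nat, forall m k : nat,
    (N <= m)%N -> (N <= k)%N -> `‖ u m - u k ‖ < e.

Definition closed_subspace (V : H -> Prop) : Prop :=
  [/\ V 0, (forall x y, V x -> V y -> V (x + y)), (forall a x, V x -> V (a *: x)) &
      (forall u x, (forall k, V (u k)) -> hconverges u x -> V x)].

Lemma hilbert_complete {u : nat -> H} : hcauchy u -> exists l, hconverges u l.
Proof. by case: hH => _ _ _ _; apply. Qed.

Lemma midpoint_sqr_le x y z w (d s t : R) : w + w = y + z ->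
  0 <= d -> 0 <= s <= 1 -> 0 <= t <= 1 -> d <= `‖ x - w ‖ ->
  `‖ x - y ‖ <= d + s -> `‖ x - z ‖ <= d + t ->
  `‖ y - z ‖ ^+ 2 <= (4 * d + 2) * (s + t).
Proof.
move=> ww d0 /andP[s0 s1] /andP[t0 t1] dw dy dz.
have -> : y - z = (x - z) - (x - y) by rewrite [RHS]addrC opprB addrA subrK.
have hw : (x - z) + (x - y) = (x - w) + (x - w).
  by rewrite addrACA [RHS]addrACA -!opprD ww [z + y]addrC.
have := hnorm_parallelogram (x - z) (x - y).
rewrite hw hnormD_sqr -sqr_hnorm.
have W2 : d ^+ 2 <= `‖ x - w ‖ ^+ 2 by rewrite ler_sqr ?nnegrE ?hnorm_ge0.
have Y2 : `‖ x - y ‖ ^+ 2 <= (d + s) ^+ 2 by rewrite ler_sqr ?nnegrE ?hnorm_ge0 ?addr_ge0.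
have Z2 : `‖ x - z ‖ ^+ 2 <= (d + t) ^+ 2 by rewrite ler_sqr ?nnegrE ?hnorm_ge0 ?addr_ge0.
move: W2 Y2 Z2.
move: (`‖ x - w ‖ ^+ 2) (`‖ x - y ‖ ^+ 2) (`‖ x - z ‖ ^+ 2) (`‖ x - z - (x - y) ‖ ^+ 2).
move=> W Y Z D; nra.
Qed.

Lemma minimizing_seq_cauchy {V : H -> Prop} {x} {d : R} {u : nat -> H} :
  (forall y z, V y -> V z -> V (2^-1 *: (y + z))) ->
  0 <= d -> (forall v, V v -> d <= `‖ x - v ‖) ->
  (forall k, V (u k) /\ `‖ x - u k ‖ < d + k.+1%:R^-1) -> hcauchy u.
Proof.
move=> Vmid d0 dle hu e e0.
pose eps (k : nat) : R := k.+1%:R^-1.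
have eps_ge0 k : 0 <= eps k by rewrite invr_ge0 ler0n.
have eps_le1 k : eps k <= 1 by rewrite invf_le1 ?ltr0Sn // ler1n.
have eps_mono k m : (k <= m)%N -> eps m <= eps k.
  by move=> km; rewrite lef_pV2 ?posrE ?ltr0Sn // ler_nat.
have sqr_dist m k : `‖ u m - u k ‖ ^+ 2 <= (4 * d + 2) * (eps m + eps k).
  have [Vm um] := hu m; have [Vk uk] := hu k.
  apply: (@midpoint_sqr_le x _ _ (2^-1 *: (u m + u k))) => //.
  - by rewrite -scalerDl -mulr2n -[2^-1 *+ 2]mulr_natl mulfV ?pnatr_eq0 // scale1r.
  - by rewrite eps_ge0 eps_le1.
  - by rewrite eps_ge0 eps_le1.
  - exact/dle/Vmid.
  - exact: ltW.
  - exact: ltW.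
have c0 : 0 < e ^+ 2 / (2 * (4 * d + 2)) by rewrite divr_gt0 ?exprn_gt0 //; lra.
have [N hN] := exists_inv_succ_lt c0.
exists N => m k hm hk.
rewrite -ltr_sqr ?nnegrE ?hnorm_ge0 ?ltW //; apply: (le_lt_trans (sqr_dist m k)).
have := hN N (leqnn N); rewrite ltr_pdivlMr; last lra.
have := eps_mono _ _ hm; have := eps_mono _ _ hk; rewrite /eps.
move: (m.+1%:R^-1) (k.+1%:R^-1) (N.+1%:R^-1) => a b c; nra.
Qed.

Lemma exists_nearest {V} : closed_subspace V ->
  forall x, exists2 p, V p & forall v, V v -> `‖ x - p ‖ <= `‖ x - v ‖.
Proof.
move=> [V0 VD VZ Vlim] x.
pose E : set R := fun r => exists2 v, V v & r = `‖ x - v ‖.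
have Einf : has_inf E by split; [exists `‖ x - 0 ‖; exists 0|exists 0 => r [v _ ->]; exact: hnorm_ge0].
set d := inf E.
have d0 : 0 <= d by apply: lb_le_inf Einf.1 _ => r [v _ ->]; exact: hnorm_ge0.
have dle v : V v -> d <= `‖ x - v ‖ by move=> Vv; apply: (ge_inf Einf.2); exists v.
have /choice[u hu] : forall k, exists v, V v /\ `‖ x - v ‖ < d + k.+1%:R^-1.
  move=> k; have ek : 0 < k.+1%:R^-1 :> R by rewrite invr_gt0 ltr0Sn.
  by have [r [v Vv ->] hr] := inf_adherent ek Einf; exists v.
have Vmid y z : V y -> V z -> V (2^-1 *: (y + z)) by move=> Vy Vz; apply/VZ/VD.
have [p up] := hilbert_complete (minimizing_seq_cauchy Vmid d0 dle hu).
exists p => [|v Vv]; first by apply: (Vlim u) => // k; case: (hu k).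
apply: le_trans (dle v Vv); apply/ler_addgt0Pr => e e0.
have e2 : 0 < e / 2 by rewrite divr_gt0.
have [N1 hN1] := up _ e2; have [N2 hN2] := exists_inv_succ_lt e2.
pose k := maxn N1 N2; have [_ uk] := hu k.
have := ler_hdistD x (u k) p; have := hN1 k (leq_maxl _ _); have := hN2 k (leq_maxr _ _).
move: uk; move: (k.+1%:R^-1) (`‖ x - u k ‖) (`‖ u k - p ‖) => a b c; lra.
Qed.

Lemma Re_ip_eq0_of_min {y v} :
  (forall t : R, `‖ y ‖ <= `‖ y - t%:C *: v ‖) -> Re (ip y v) = 0.
Proof.
move=> ymin; have := ymin (Re (ip y v) / (`‖ v ‖ ^+ 2 + 1)).
rewrite -ler_sqr ?nnegrE ?hnorm_ge0 // hnormB_realZ_sqr.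
have := sqr_ge0 `‖ v ‖.
move: (Re (ip y v)) (`‖ v ‖ ^+ 2) (`‖ y ‖ ^+ 2) => c W Y W0 cmin.
have W1 : 0 < W + 1 by lra.
have : 0 <= c ^+ 2 * (- W - 2).
  have -> : c ^+ 2 * (- W - 2) =
      (Y - 2 * (c / (W + 1)) * c + (c / (W + 1)) ^+ 2 * W - Y) * (W + 1) ^+ 2.
    by field; rewrite gt_eqF.
  by rewrite mulr_ge0 ?sqr_ge0 // subr_ge0.
by move=> h; apply/eqP; rewrite -sqrf_eq0 eq_le sqr_ge0 andbT; nra.
Qed.

Lemma nearest_orthogonal (V : H -> Prop) x p :
  (forall y z, V y -> V z -> V (y + z)) -> (forall a y, V y -> V (a *: y)) ->
  V p -> (forall v, V v -> `‖ x - p ‖ <= `‖ x - v ‖) ->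
  forall v, V v -> ip v (x - p) = 0.
Proof.
move=> VD VZ Vp pmin v Vv.
have xp_min w : V w -> forall t : R, `‖ x - p ‖ <= `‖ x - p - t%:C *: w ‖.
  by move=> Vw t; rewrite -addrA -opprD; apply/pmin/VD/VZ.
have Re0 := Re_ip_eq0_of_min (xp_min v Vv).
have := Re_ip_eq0_of_min (xp_min _ (VZ 'i v Vv)).
rewrite ipZr mulrC ReiNIm => Im0.
by rewrite ipC; apply: complex_ext; [rewrite ReJ Re0|rewrite ImJ Im0].
Qed.

Lemma orthogonal_decomposition {V} : closed_subspace V ->
  forall x, exists2 p, V p & forall v, V v -> ip v (x - p) = 0.
Proof.
move=> hV x; have [p Vp pmin] := exists_nearest hV x.
by exists p => //; case: hV => _ VD VZ _; exact: nearest_orthogonal.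
Qed.

Lemma orthogonal_decomposition_unique {V : H -> Prop} {x p p'} :
  (forall y z, V y -> V z -> V (y - z)) -> V p -> V p' ->
  (forall v, V v -> ip v (x - p) = 0) -> (forall v, V v -> ip v (x - p') = 0) -> p = p'.
Proof.
move=> VB Vp Vp' xp xp'; apply/eqP; rewrite -subr_eq0; apply/eqP/ip_self_eq0.
have e : p - p' = (x - p') - (x - p) by rewrite [RHS]addrC opprB subrKA.
have Vd : V (p - p') by exact: VB.
by rewrite {2}e ipBr xp' // xp // subrr.
Qed.

(** * Bounded operators, adjoints and commutants *)

Section LinearOperator.
Context {T : H -> H} (lT : linop T).

Lemma linop0 : T 0 = 0.
Proof.
have := lT 1 0 0; rewrite !scale1r addr0 => e.
by apply: (addrI (T 0)); rewrite addr0 -e.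
Qed.

Lemma linopD x y : T (x + y) = T x + T y.
Proof. by have := lT 1 x y; rewrite !scale1r. Qed.

Lemma linopZ a x : T (a *: x) = a *: T x.
Proof. by have := lT a x 0; rewrite !addr0 linop0 addr0. Qed.

Lemma linopN x : T (- x) = - T x.
Proof. by rewrite -scaleN1r linopZ scaleN1r. Qed.

Lemma linopB x y : T (x - y) = T x - T y.
Proof. by rewrite linopD linopN. Qed.

End LinearOperator.

Lemma bounded_op_bound {T} : bounded_op ip T ->
  exists2 K : R, 0 <= K & forall x, `‖ T x ‖ <= K * `‖ x ‖.
Proof.
move=> [_ [M hM]]; exists `|M| => // x.
by apply: le_trans (hM x) _; rewrite ler_wpM2r ?hnorm_ge0 ?ler_norm.
Qed.

Section BoundedFunctional.
Variables (f : H -> R[i]) (K : R).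
Hypothesis f_linear : forall a x y, f (a *: x + y) = a * f x + f y.
Hypothesis f_bounded : forall x, `|Re (f x)| <= K * `‖ x ‖.

Lemma functional0 : f 0 = 0.
Proof.
have := f_linear 1 0 0; rewrite scale1r addr0 mul1r => e.
by apply: (addrI (f 0)); rewrite addr0 -e.
Qed.

Lemma functionalD x y : f (x + y) = f x + f y.
Proof. by have := f_linear 1 x y; rewrite scale1r mul1r. Qed.

Lemma functionalZ a x : f (a *: x) = a * f x.
Proof. by have := f_linear a x 0; rewrite !addr0 functional0 addr0. Qed.

Lemma functionalB x y : f (x - y) = f x - f y.
Proof. by rewrite functionalD -scaleN1r functionalZ mulN1r. Qed.

Lemma Re_functional_lim {u : nat -> H} {x} :
  (forall k, f (u k) = 0) -> hconverges u x -> Re (f x) = 0.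
Proof.
move=> fu ux; apply/eqP; rewrite -normr_le0; apply/ler_addgt0Pr => e e0.
have K1 : 0 < `|K| + 1 by have := normr_ge0 K; lra.
have [N hN] := ux _ (divr_gt0 e0 K1).
have -> : Re (f x) = - Re (f (u N - x)) by rewrite functionalB fu sub0r raddfN opprK.
rewrite normrN add0r; apply: le_trans (f_bounded _) _.
apply: le_trans (ler_wpM2r (hnorm_ge0 _) (ler_norm K)) _.
have := hN N (leqnn N); rewrite ltr_pdivlMr // => hNe.
have := hnorm_ge0 (u N - x); have := normr_ge0 K.
move: hNe; move: `|K| `‖ u N - x ‖ => k n; nra.
Qed.

Lemma functional_kernel_closed : closed_subspace (fun x => f x = 0).
Proof.
split=> [|x y fx fy|a x fx|u x fu ux]; first exact: functional0.
- by rewrite functionalD fx fy addr0.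
- by rewrite functionalZ fx mulr0.
have ReIm0 : Re (f ('i *: x)) = 0.
  apply: (@Re_functional_lim (fun k => 'i *: u k)) => [k|e e0].
    by rewrite functionalZ fu mulr0.
  have [N hN] := ux e e0; exists N => k Nk.
  by rewrite -scalerBr hnormZ /= expr0n expr1n add0r sqrtr1 mul1r hN.
rewrite functionalZ mulrC ReiNIm in ReIm0.
apply: complex_ext; first exact: (Re_functional_lim fu ux).
by move/eqP: ReIm0; rewrite oppr_eq0 => /eqP.
Qed.

Lemma riesz_representation : exists z, forall x, f x = ip z x.
Proof.
have [f0|/existsNP[x0 fx0]] := pselect (forall x, f x = 0).
  by exists 0 => x; rewrite f0 ip0l.
have [p fp orth] := orthogonal_decomposition functional_kernel_closed x0.
set u := x0 - p.
have fu : f u = f x0 by rewrite functionalB fp subr0.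
have uu0 : ip u u != 0.
  by apply: contra_notN fx0 => /eqP/ip_self_eq0 u0; rewrite -fu u0 functional0.
exists ((f u / ip u u)^* *: u) => x.
have : ip u (f u *: x - f x *: u) = 0.
  by rewrite ipC orth ?rmorph0 // functionalB !functionalZ mulrC subrr.
rewrite ipBr !ipZr => /eqP; rewrite subr_eq0 => /eqP e.
by rewrite ipZl conjCK; apply: (mulIf uu0); rewrite -e mulrAC; field.
Qed.

End BoundedFunctional.

Lemma adjoint_exists {T} : bounded_op ip T -> exists S, bounded_op ip S /\ is_adjoint ip T S.
Proof.
move=> bT; have [K K0 hK] := bounded_op_bound bT.
have /choice[S hS] : forall y, exists z, forall x, ip y (T x) = ip z x.
  move=> y; apply: (@riesz_representation _ (`‖ y ‖ * K)) => [a x x'|x].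
    by rewrite bT.1 ipDr ipZr.
  by apply: le_trans (normr_Re_ip_le _ _) _; rewrite -mulrA ler_wpM2l ?hnorm_ge0.
have adjS : is_adjoint ip T S by move=> x y; rewrite ipC hS -ipC.
exists S; split=> //; split.
  by move=> a y y'; apply: ip_inj_l => x; rewrite -hS ipDl ipZl ipDl ipZl -!hS.
exists K => y.
have : `‖ S y ‖ ^+ 2 <= `‖ y ‖ * (K * `‖ S y ‖).
  rewrite sqr_hnorm -hS; apply: le_trans (ler_norm _) _.
  by apply: le_trans (normr_Re_ip_le _ _) _; rewrite ler_wpM2l ?hnorm_ge0.
have := mulr_ge0 K0 (hnorm_ge0 y); have := hnorm_ge0 (S y).
move: (`‖ S y ‖) (`‖ y ‖) => s t; nra.
Qed.

Lemma adj_spec {T} : bounded_op ip T -> bounded_op ip (adj ip T) /\ is_adjoint ip T (adj ip T).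
Proof. by move/adjoint_exists; exact: epsilon_spec. Qed.

Lemma bounded_adj {T} : bounded_op ip T -> bounded_op ip (adj ip T).
Proof. by case/adj_spec. Qed.

Lemma adjP {T} : bounded_op ip T -> forall x y, ip (T x) y = ip x (adj ip T y).
Proof. by case/adj_spec. Qed.

Lemma adjP_l {T} : bounded_op ip T -> forall x y, ip (adj ip T x) y = ip x (T y).
Proof. by move=> bT x y; rewrite ipC -adjP // -ipC. Qed.

Lemma adj_unique {T S} : bounded_op ip T -> is_adjoint ip T S -> adj ip T = S.
Proof.
by move=> bT TS; apply: funext => y; apply: ip_inj_r => x; rewrite -adjP.
Qed.

Lemma adjK {T} : bounded_op ip T -> adj ip (adj ip T) = T.
Proof. by move=> bT; apply: adj_unique; [exact: bounded_adj|exact: adjP_l]. Qed.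

Lemma bounded_zero : bounded_op ip (@zero_op R H).
Proof.
split=> [a x y|]; first by rewrite /zero_op scaler0 addr0.
by exists 0 => x; rewrite hnorm0 mul0r.
Qed.

Lemma bounded_id : bounded_op ip id.
Proof. by split=> //; exists 1 => x; rewrite mul1r. Qed.

Lemma bounded_add {S T} : bounded_op ip S -> bounded_op ip T -> bounded_op ip (add_op S T).
Proof.
move=> bS bT; have [KS _ hS] := bounded_op_bound bS; have [KT _ hT] := bounded_op_bound bT.
split=> [a x y|]; first by rewrite /add_op bS.1 bT.1 scalerDr addrACA.
exists (KS + KT) => x; rewrite /add_op mulrDl.
by apply: le_trans (ler_hnormD _ _) _; apply: lerD.
Qed.

Lemma bounded_scale c {T} : bounded_op ip T -> bounded_op ip (scale_op c T).
Proof.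
move=> bT; have [K _ hK] := bounded_op_bound bT.
split=> [a x y|]; first by rewrite /scale_op bT.1 scalerDr !scalerA mulrC.
exists (Normc.normc c * K) => x; rewrite /scale_op hnormZ -mulrA.
by rewrite ler_wpM2l ?normc_ge0.
Qed.

Lemma bounded_comp {S T} : bounded_op ip S -> bounded_op ip T -> bounded_op ip (S \o T).
Proof.
move=> bS bT; have [KS KS0 hS] := bounded_op_bound bS; have [KT _ hT] := bounded_op_bound bT.
split=> [a x y|]; first by rewrite /= bT.1 bS.1.
exists (KS * KT) => x /=; apply: le_trans (hS _) _.
by rewrite -mulrA ler_wpM2l.
Qed.

Lemma adj_comp {S T} : bounded_op ip S -> bounded_op ip T ->
  adj ip (S \o T) = adj ip T \o adj ip S.
Proof.
move=> bS bT; apply: adj_unique; first exact: bounded_comp.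
by move=> x y /=; rewrite !adjP.
Qed.

Lemma adj_zero : adj ip (@zero_op R H) = @zero_op R H.
Proof.
by apply: adj_unique; [exact: bounded_zero|move=> x y; rewrite /zero_op ip0l ip0r].
Qed.

Lemma adj_add {S T} : bounded_op ip S -> bounded_op ip T ->
  adj ip (add_op S T) = add_op (adj ip S) (adj ip T).
Proof.
move=> bS bT; apply: adj_unique; first exact: bounded_add.
by move=> x y; rewrite /add_op ipDl ipDr !adjP.
Qed.

Lemma adj_scale c {T} : bounded_op ip T -> adj ip (scale_op c T) = scale_op c^* (adj ip T).
Proof.
move=> bT; apply: adj_unique; first exact: bounded_scale.
by move=> x y; rewrite /scale_op ipZl ipZr adjP.
Qed.

Section Commutant.
Context {S : (H -> H) -> Prop} (S_bounded : forall s, S s -> bounded_op ip s).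
Hypothesis S_adj : forall s, S s -> S (adj ip s).

Lemma commutantP {T} : commutant ip S T -> forall s, S s -> forall x, T (s x) = s (T x).
Proof. by move=> [_ TS] s Ss x; rewrite -[T (s x)]/((T \o s) x) TS. Qed.

Lemma commutant_star_subalg : star_subalg ip (commutant ip S).
Proof.
split; last first.
  move=> T [bT TS]; split; first exact: bounded_adj.
  move=> s Ss; have bs := S_bounded _ Ss.
  have bs' := bounded_adj bs.
  by rewrite -{1}(adjK bs) -adj_comp // -(TS _ (S_adj _ Ss)) adj_comp // adjK.
split=> [T []|| T T' cT cT' | c T cT | T T' cT cT'] //.
- split=> [|s Ss]; first exact: bounded_zero.
  by apply: funext => x; rewrite /= /zero_op (linop0 (S_bounded _ Ss).1).
- split=> [|s Ss]; first by apply: bounded_add; [case: cT|case: cT'].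
  apply: funext => x; rewrite /= /add_op (commutantP cT _ Ss) (commutantP cT' _ Ss).
  by rewrite (linopD (S_bounded _ Ss).1).
- split=> [|s Ss]; first by apply: bounded_scale; case: cT.
  apply: funext => x; rewrite /= /scale_op (commutantP cT _ Ss).
  by rewrite (linopZ (S_bounded _ Ss).1).
- split=> [|s Ss]; first by apply: bounded_comp; [case: cT|case: cT'].
  by apply: funext => x; rewrite /= (commutantP cT' _ Ss) (commutantP cT _ Ss).
Qed.

End Commutant.

Lemma bicommutant_star_subalg {S} : (forall s, S s -> bounded_op ip s) ->
  (forall s, S s -> S (adj ip s)) -> star_subalg ip (commutant ip (commutant ip S)).
Proof.
move=> Sb Sadj; have [[S'b _ _ _ _] S'adj] := commutant_star_subalg Sb Sadj.
exact: commutant_star_subalg.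
Qed.

Lemma von_neumann_star_subalg {M} : von_neumann ip M -> star_subalg ip M.
Proof.
move=> [Madj MM'']; have Mb T : M T -> bounded_op ip T by move/MM''; case.
have [[_ M0 MD MZ MC] _] := bicommutant_star_subalg Mb Madj.
split=> //; split=> // [|S T MS MT|c T MT|S T MS MT]; apply/MM''.
- exact: M0.
- by apply: MD; apply/MM''.
- by apply: MZ; apply/MM''.
- by apply: MC; apply/MM''.
Qed.

Lemma gen_star_alg_star_subalg {B M} : star_subalg ip M -> (forall b, B b -> M b) ->
  star_subalg ip (gen_star_alg ip B).
Proof.
move=> sM BM; split=> [|a Ca S sS BS]; last first.
  by case: (sS) => _; apply; apply: Ca.
split=> [a Ca|S [[_ S0 _ _ _] _] //|a b Ca Cb S sS BS|c a Ca S sS BS|a b Ca Cb S sS BS].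
- by case: (sM) => [[Mb _ _ _ _] _]; apply/Mb/(Ca M).
- by case: (sS) => [[_ _ SD _ _] _]; apply: SD; [apply: Ca|apply: Cb].
- by case: (sS) => [[_ _ _ SZ _] _]; apply: SZ; apply: Ca.
- by case: (sS) => [[_ _ _ _ SC] _]; apply: SC; [apply: Ca|apply: Cb].
Qed.

(** * Vectors with totally bounded orbits *)

Section Unitary.
Context {V : H -> H} (V_unitary : unitary ip V).

Lemma bounded_unitary : bounded_op ip V.
Proof. by case: V_unitary. Qed.

Lemma hnorm_unitary x : `‖ V x ‖ = `‖ x ‖.
Proof. by case: V_unitary => _ isoV _; rewrite /hnorm isoV. Qed.

Lemma adj_unitaryK : cancel V (adj ip V).
Proof.
move=> y; apply: ip_inj_r => x; rewrite -(adjP bounded_unitary).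
by case: V_unitary => _ ->.
Qed.

Lemma unitary_adjK : cancel (adj ip V) V.
Proof. by move=> y; case: V_unitary => _ _ /(_ y) [x <-]; rewrite adj_unitaryK. Qed.

End Unitary.

Definition totally_bounded (S : H -> Prop) : Prop :=
  forall e : R, 0 < e -> exists L : seq H, forall x, S x -> exists2 l, l \in L & `‖ x - l ‖ < e.

Lemma totally_bounded_range_net {I : Type} (f : I -> H) :
  totally_bounded (fun y => exists i, y = f i) ->
  forall e : R, 0 < e -> exists s : seq I, forall i, exists j, List.In j s /\ `‖ f i - f j ‖ < e.
Proof.
move=> tbf e e0; have e2 : 0 < e / 2 by rewrite divr_gt0.
have [L hL] := tbf _ e2.
have [s hs] : exists s : seq I, forall l, l \in L -> (exists i, `‖ f i - l ‖ < e / 2) ->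
    exists j, List.In j s /\ `‖ f j - l ‖ < e / 2.
  elim: L {hL} => [|l L [s hs]]; first by exists [::].
  have [[j jl]|nj] := pselect (exists j, `‖ f j - l ‖ < e / 2).
    exists (j :: s) => l'; rewrite inE => /predU1P[-> _|l'L il']; first by exists j; split; [left|].
    by have [j' [j's fj']] := hs l' l'L il'; exists j'; split; [right|].
  exists s => l'; rewrite inE => /predU1P[-> il'|]; [by case: nj|exact: hs].
exists s => i; have [l lL il] := hL (f i) (ex_intro _ i erefl).
have [j [js jl]] := hs l lL (ex_intro _ i il); exists j; split=> //.
apply: le_lt_trans (ler_hdistD _ l _) _; rewrite (hdistC l).
by move: il jl; move: `‖ f i - l ‖ `‖ f j - l ‖ => a b; lra.
Qed.

Definition tb_orbit {G : groupType} (U : G -> H -> H) (x : H) : Prop :=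
  totally_bounded (fun y => exists g, y = U g x).

Section Orbits.
Context {G : groupType} {U : G -> H -> H} (U_unitary : forall g, unitary ip (U g)).
Local Notation tb_orbit := (tb_orbit U).

Let Ulin g := (bounded_unitary (U_unitary g)).1.

Lemma tb_orbit0 : tb_orbit 0.
Proof.
move=> e e0; exists [:: 0] => _ [g ->]; exists 0; rewrite ?mem_head //.
by rewrite (linop0 (Ulin g)) subrr hnorm0.
Qed.

Lemma tb_orbitD x y : tb_orbit x -> tb_orbit y -> tb_orbit (x + y).
Proof.
move=> tbx tby e e0; have e2 : 0 < e / 2 by rewrite divr_gt0.
have [Lx hx] := tbx _ e2; have [Ly hy] := tby _ e2.
exists [seq u + v | u <- Lx, v <- Ly] => _ [g ->].
have [a aL xa] := hx (U g x) (ex_intro _ g erefl).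
have [b bL yb] := hy (U g y) (ex_intro _ g erefl).
exists (a + b); first exact: allpairs_f.
rewrite (linopD (Ulin g)) opprD addrACA; apply: le_lt_trans (ler_hnormD _ _) _.
by move: xa yb; move: `‖ U g x - a ‖ `‖ U g y - b ‖ => u v; lra.
Qed.

Lemma tb_orbit_lim (u : nat -> H) x : (forall k, tb_orbit (u k)) -> hconverges u x ->
  tb_orbit x.
Proof.
move=> tbu ux e e0; have e2 : 0 < e / 2 by rewrite divr_gt0.
have [N hN] := ux _ e2; have [L hL] := tbu N _ e2.
exists L => _ [g ->]; have [l lL ul] := hL (U g (u N)) (ex_intro _ g erefl).
exists l => //; apply: le_lt_trans (ler_hdistD _ (U g (u N)) _) _.
rewrite -(linopB (Ulin g)) (hnorm_unitary (U_unitary g)) hdistC.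
by move: (hN N (leqnn N)) ul; move: `‖ u N - x ‖ `‖ U g (u N) - l ‖ => a b; lra.
Qed.

Lemma tb_orbit_twisted {c : H -> H} {mu : G -> R[i]} : bounded_op ip c ->
  (forall g, Normc.normc (mu g) <= 1) -> (forall g y, U g (c y) = mu g *: c (U g y)) ->
  forall y, tb_orbit y -> tb_orbit (c y).
Proof.
move=> bc mu1 cU y tby e e0; have [K K0 hK] := bounded_op_bound bc.
have A0 : 0 <= K * (`‖ y ‖ + 2) by rewrite mulr_ge0 ?addr_ge0 ?hnorm_ge0.
have [d /andP[d0 d1] dA] := exists_small_factor e0 A0.
have [L hL] := tby _ d0; have [W hW] := finite_net_unit_disc d0.
exists [seq w *: c l | w <- W, l <- L] => _ [g ->].
have [l lL yl] := hL (U g y) (ex_intro _ g erefl).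
have [w wW muw] := hW _ (mu1 g).
exists (w *: c l); first exact: allpairs_f.
have -> : U g (c y) - w *: c l = (mu g - w) *: c (U g y) + w *: c (U g y - l).
  by rewrite cU (linopB bc.1) scalerBl scalerBr addrA subrK.
apply: le_lt_trans (ler_hnormD _ _) _; rewrite !hnormZ.
have w2 : Normc.normc w <= 2.
  have := le_normcD (mu g) (w - mu g); rewrite addrC subrK -opprB normcN.
  by move: (mu1 g) muw; move: (Normc.normc _) (Normc.normc _) (Normc.normc _) => a b f; lra.
have cy : `‖ c (U g y) ‖ <= K * `‖ y ‖ by rewrite -(hnorm_unitary (U_unitary g) y) hK.
have cyl : `‖ c (U g y - l) ‖ <= K * d by apply: le_trans (hK _) (ler_wpM2l K0 (ltW yl)).
have t1 : Normc.normc (mu g - w) * `‖ c (U g y) ‖ <= d * (K * `‖ y ‖).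
  by apply: ler_pM; rewrite ?normc_ge0 ?hnorm_ge0.
have t2 : Normc.normc w * `‖ c (U g y - l) ‖ <= 2 * (K * d).
  by apply: ler_pM; rewrite ?normc_ge0 ?hnorm_ge0.
move: dA t1 t2; move: (Normc.normc _ * _) (Normc.normc _ * _) => p q; lra.
Qed.

Lemma tb_orbitZ a x : tb_orbit x -> tb_orbit (a *: x).
Proof.
apply: (@tb_orbit_twisted (scale_op a id) (fun=> 1)) => [|g|g y].
- exact: bounded_scale bounded_id.
- by rewrite Normc.normc1.
- by rewrite /scale_op scale1r (linopZ (Ulin g)).
Qed.

Lemma tb_orbit_closed_subspace : closed_subspace tb_orbit.
Proof. split; [exact: tb_orbit0|exact: tb_orbitD|exact: tb_orbitZ|exact: tb_orbit_lim]. Qed.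

Lemma tb_orbit_fixed x : (forall g, U g x = x) -> tb_orbit x.
Proof.
move=> Ux e e0; exists [:: x] => _ [g ->]; exists x; rewrite ?mem_head //.
by rewrite Ux subrr hnorm0.
Qed.

End Orbits.

Section Projection.
Context {V : H -> Prop} (V_closed : closed_subspace V) {P : H -> H}.
Hypothesis P_in : forall x, V (P x).
Hypothesis P_orth : forall x v, V v -> ip v (x - P x) = 0.

Lemma projectionE x p : V p -> (forall v, V v -> ip v (x - p) = 0) -> P x = p.
Proof.
case: V_closed => _ VD VZ _ Vp xp.
have VB y z : V y -> V z -> V (y - z) by move=> Vy Vz; rewrite -scaleN1r; apply/VD/VZ.
exact: (orthogonal_decomposition_unique VB (P_in x) Vp (P_orth x)).
Qed.

Lemma projection_id x : V x -> P x = x.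
Proof. by move=> Vx; apply: projectionE => // v _; rewrite subrr ip0r. Qed.

Lemma projection_bounded : bounded_op ip P.
Proof.
case: (V_closed) => _ VD VZ _; split=> [a x y|].
  apply: projectionE => [|v Vv]; first by apply/VD/P_in; apply/VZ/P_in.
  have -> : a *: x + y - (a *: P x + P y) = a *: (x - P x) + (y - P y).
    by rewrite scalerBr opprD addrACA.
  by rewrite ipDr ipZr !P_orth // mulr0 addr0.
exists 1 => x; rewrite mul1r -ler_sqr ?nnegrE ?hnorm_ge0 //.
have -> : `‖ x ‖ = `‖ P x + (x - P x) ‖ by rewrite addrC subrK.
by rewrite hnormD_sqr P_orth // mulr0 addr0 lerDl sqr_ge0.
Qed.

Lemma projection_commute c : bounded_op ip c ->
  (forall x, V x -> V (c x)) -> (forall x, V x -> V (adj ip c x)) -> c \o P = P \o c.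
Proof.
move=> bc cV c'V; apply: funext => x /=; apply/esym/projectionE; first exact/cV/P_in.
by move=> v Vv; rewrite -(linopB bc.1) -(adjP_l bc) P_orth //; exact: c'V.
Qed.

End Projection.

Lemma exists_projection {V} : closed_subspace V ->
  exists P : H -> H, (forall x, V (P x)) /\ forall x v, V v -> ip v (x - P x) = 0.
Proof.
move=> V_closed; have /choice[P hP] : forall x, exists p, V p /\ forall v, V v -> ip v (x - p) = 0.
  by move=> x; have [p Vp xp] := orthogonal_decomposition V_closed x; exists p.
by exists P; split=> x; case: (hP x).
Qed.

Definition reduces (V : H -> Prop) (c : H -> H) : Prop :=
  [/\ bounded_op ip c, forall x, V x -> V (c x) & forall x, V x -> V (adj ip c x)].

Lemma reduces_star_subalg {V} : closed_subspace V -> star_subalg ip (reduces V).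
Proof.
case=> V0 VD VZ _; split=> [|c [bc cV c'V]]; last by split; [exact: bounded_adj|exact: c'V|rewrite adjK].
split=> [c []|| c d [bc cV c'V] [bd dV d'V] | z c [bc cV c'V] | c d [bc cV c'V] [bd dV d'V]] //.
- by split=> [|x _|x _]; rewrite ?adj_zero //; exact: bounded_zero.
- split=> [|x Vx|x Vx]; first exact: bounded_add.
  + by apply: VD; [apply: cV|apply: dV].
  + by rewrite adj_add //; apply: VD; [apply: c'V|apply: d'V].
- split=> [|x Vx|x Vx]; first exact: bounded_scale.
  + by apply/VZ/cV.
  + by rewrite adj_scale //; apply/VZ/c'V.
- split=> [|x Vx|x Vx]; first exact: bounded_comp.
  + by apply/cV/dV.
  + by rewrite adj_comp //; apply/d'V/c'V.
Qed.

(** * Covariant operator algebras *)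

Section Covariance.
Context {G : groupType} {U : G -> H -> H} (U_unitary : forall g, unitary ip (U g)).
Implicit Types (g : G) (c : H -> H).

Lemma alphaE g c x : alpha ip U g c x = U g (c (adj ip (U g) x)).
Proof. by []. Qed.

Let Ub g := bounded_unitary (U_unitary g).

Lemma bounded_alpha g c : bounded_op ip c -> bounded_op ip (alpha ip U g c).
Proof. by move=> bc; apply/bounded_comp/bounded_adj/Ub; exact: bounded_comp (Ub g) bc. Qed.

Lemma alpha_zero g : alpha ip U g (@zero_op R H) = @zero_op R H.
Proof. by apply: funext => x; rewrite alphaE /zero_op (linop0 (Ub g).1). Qed.

Lemma alpha_add g S T : alpha ip U g (add_op S T) = add_op (alpha ip U g S) (alpha ip U g T).
Proof. by apply: funext => x; rewrite !alphaE /add_op (linopD (Ub g).1). Qed.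

Lemma alpha_scale g a c : alpha ip U g (scale_op a c) = scale_op a (alpha ip U g c).
Proof. by apply: funext => x; rewrite !alphaE /scale_op (linopZ (Ub g).1). Qed.

Lemma alpha_comp g S T : alpha ip U g (S \o T) = alpha ip U g S \o alpha ip U g T.
Proof. by apply: funext => x; rewrite /= !alphaE adj_unitaryK. Qed.

Lemma alpha_adj g c : bounded_op ip c -> adj ip (alpha ip U g c) = alpha ip U g (adj ip c).
Proof.
move=> bc; apply: adj_unique; first exact: bounded_alpha.
by move=> x y; rewrite !alphaE (adjP (Ub g)) (adjP bc) -(adjP_l (Ub g)).
Qed.

Lemma gen_star_alg_alpha B : star_subalg ip (gen_star_alg ip B) ->
  (forall g b, B b -> gen_star_alg ip B (alpha ip U g b)) ->
  forall g c, gen_star_alg ip B c -> gen_star_alg ip B (alpha ip U g c).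
Proof.
move=> [[Cb C0 CD CZ CC] Cadj] BC g c Cc.
pose S c := gen_star_alg ip B c /\ forall g, gen_star_alg ip B (alpha ip U g c).
have sS : star_subalg ip S.
  split; last first.
    move=> c' [Cc' Cc'g]; split=> [|h]; first exact: Cadj.
    by rewrite -alpha_adj; [exact: Cadj|exact: Cb].
  split=> [c' [Cc' _]|||z c1 [C1 C1g]|]; first exact: Cb.
  - by split=> [|h]; rewrite ?alpha_zero.
  - move=> c1 c2 [C1 C1g] [C2 C2g]; split=> [|h]; first exact: CD.
    by rewrite alpha_add; exact: CD.
  - by split=> [|h]; [exact: CZ|rewrite alpha_scale; exact: CZ].
  - move=> c1 c2 [C1 C1g] [C2 C2g]; split=> [|h]; first exact: CC.
    by rewrite alpha_comp; exact: CC.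
have BS b : B b -> S b by split=> [S' _ BS'|h]; [exact: BS'|exact: BC].
by have [_] := Cc S sS BS; apply.
Qed.

Lemma bicommutant_alpha S : (forall g s, S s -> S (alpha ip U g s)) ->
  forall g T, commutant ip (commutant ip S) T -> commutant ip (commutant ip S) (alpha ip U g T).
Proof.
move=> S_alpha g T TS''; split=> [|s s'S]; first exact/bounded_alpha/TS''.1.
pose s' := adj ip (U g) \o s \o U g.
have s'S' : commutant ip S s'.
  split=> [|c Sc]; first exact/bounded_comp/Ub/bounded_comp/s'S.1/bounded_adj/Ub.
  apply: funext => x; rewrite /s' /=.
  have -> : U g (c x) = alpha ip U g c (U g x) by rewrite alphaE adj_unitaryK.
  by rewrite (commutantP s'S _ (S_alpha g c Sc)) alphaE adj_unitaryK.
apply: funext => x /=; rewrite !alphaE.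
have -> : adj ip (U g) (s x) = s' (adj ip (U g) x) by rewrite /s' /= unitary_adjK.
by rewrite (commutantP TS'' _ s'S') /s' /= unitary_adjK.
Qed.

Lemma alpha_eigenE {b} {lam : G -> R[i]} : (forall g, alpha ip U g b = scale_op (lam g) b) ->
  forall g y, U g (b y) = lam g *: b (U g y).
Proof.
by move=> blam g y; have := congr1 (@^~ (U g y)) (blam g); rewrite alphaE adj_unitaryK.
Qed.

Lemma alpha_eigen_adjE {b} {lam : G -> R[i]} : bounded_op ip b ->
  (forall g, alpha ip U g b = scale_op (lam g) b) ->
  forall g y, U g (adj ip b y) = (lam g)^* *: adj ip b (U g y).
Proof.
move=> bb blam g y; apply: ip_inj_l => z.
have bz : b (adj ip (U g) z) = lam g *: adj ip (U g) (b z).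
  apply: (can_inj (adj_unitaryK (U_unitary g))).
  rewrite (alpha_eigenE blam) (unitary_adjK (U_unitary g)) /=.
  by rewrite (linopZ (Ub g).1) (unitary_adjK (U_unitary g)).
by rewrite (adjP (Ub g)) (adjP_l bb) bz ipZr -(adjP (Ub g)) -(adjP_l bb) ipZl conjCK.
Qed.

End Covariance.

Lemma bicommutant_gen_star_alg_sub B M : von_neumann ip M -> (forall b, B b -> M b) ->
  forall T, commutant ip (commutant ip (gen_star_alg ip B)) T -> M T.
Proof.
move=> M_vn BM T [bT TC']; apply/M_vn.2; split=> // s [bs sM].
have sM_star := von_neumann_star_subalg M_vn.
by apply: TC'; split=> // c Cc; apply/sM/(Cc M).
Qed.

Section Represented.
Context {G : groupType} {M : (H -> H) -> Prop} {Om : H} {U : G -> H -> H}.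
Hypothesis M_vn : von_neumann ip M.
Hypothesis M_sep : forall T, M T -> T Om = 0 -> T = @zero_op R H.
Hypothesis U_unitary : forall g, unitary ip (U g).
Hypothesis U_Om : forall g, U g Om = Om.

Local Notation eig := (fun b => eigenoperator ip M U b \/ b = @zero_op R H).

Lemma eigenvalue_normc {b} {lam : G -> R[i]} : eigenoperator ip M U b ->
  (forall g, alpha ip U g b = scale_op (lam g) b) -> forall g, Normc.normc (lam g) = 1.
Proof.
move=> [Mb [b0 _]] blam g.
have bOm : `‖ b Om ‖ != 0 by apply: contra_notN b0 => /eqP/hnorm_eq0; exact: M_sep.
apply: (mulIf bOm); rewrite mul1r -hnormZ -{1}(U_Om g).
by rewrite -(alpha_eigenE U_unitary blam) hnorm_unitary ?U_Om.
Qed.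

Lemma eig_reduces_tb_orbit b : eig b -> reduces (tb_orbit U) b.
Proof.
case=> [eb|->]; last first.
  by split=> [|x _|x _]; rewrite ?adj_zero /zero_op;
    [exact: bounded_zero|exact: (tb_orbit0 U_unitary)..].
have [Mb [_ [lam blam]]] := eb; have lam1 := eigenvalue_normc eb blam.
have bb : bounded_op ip b by move/M_vn.2: Mb => [].
split=> //.
  by apply: (tb_orbit_twisted U_unitary bb) (alpha_eigenE U_unitary blam) => g; rewrite lam1.
apply: (tb_orbit_twisted U_unitary (bounded_adj bb)) (alpha_eigen_adjE U_unitary bb blam).
by move=> g; rewrite normc_conj lam1.
Qed.

Lemma eig_M b : eig b -> M b.
Proof. by case=> [[]//|->]; case: (von_neumann_star_subalg M_vn) => [[]]. Qed.

Lemma eig_gen_star_subalg : star_subalg ip (gen_star_alg ip eig).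
Proof. exact: gen_star_alg_star_subalg (von_neumann_star_subalg M_vn) eig_M. Qed.

Lemma eig_bicommutant_sub T : commutant ip (commutant ip (gen_star_alg ip eig)) T -> M T.
Proof. exact: bicommutant_gen_star_alg_sub M_vn eig_M T. Qed.

Lemma eig_bicommutant_star_subalg :
  star_subalg ip (commutant ip (commutant ip (gen_star_alg ip eig))).
Proof.
by have [[Cb _ _ _ _] Cadj] := eig_gen_star_subalg; exact: bicommutant_star_subalg.
Qed.

Lemma eig_alpha g b : eig b -> gen_star_alg ip eig (alpha ip U g b).
Proof.
case=> [eb|->] S sS eigS; last by rewrite (alpha_zero U_unitary); apply: eigS; right.
have [_ [_ [lam blam]]] := eb.
by rewrite blam; case: sS => [[_ _ _ SZ _] _]; apply/SZ/eigS; left.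
Qed.

Lemma eig_bicommutant_alpha g T : commutant ip (commutant ip (gen_star_alg ip eig)) T ->
  commutant ip (commutant ip (gen_star_alg ip eig)) (alpha ip U g T).
Proof.
exact: (bicommutant_alpha U_unitary _ (gen_star_alg_alpha U_unitary _ eig_gen_star_subalg eig_alpha)).
Qed.

Lemma eig_bicommutant_tb_orbit T : commutant ip (commutant ip (gen_star_alg ip eig)) T ->
  tb_orbit U (T Om).
Proof.
move=> TC''; have V_closed := tb_orbit_closed_subspace U_unitary.
have [P [P_in P_orth]] := exists_projection V_closed.
have PC' : commutant ip (gen_star_alg ip eig) P.
  split=> [|c Cc]; first exact: (projection_bounded V_closed P_in P_orth).
  have [bc cV c'V] := Cc _ (reduces_star_subalg V_closed) eig_reduces_tb_orbit.
  exact/esym/(projection_commute V_closed P_in P_orth).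
have P_Om : P Om = Om by apply: (projection_id V_closed P_in P_orth); exact: tb_orbit_fixed.
by rewrite -P_Om (commutantP TC'' _ PC').
Qed.

Lemma eig_bicommutant_orbit_totally_bounded T :
  commutant ip (commutant ip (gen_star_alg ip eig)) T -> orbit_totally_bounded ip U Om T.
Proof.
move=> TC'' e e0.
have [s hs] := totally_bounded_range_net (fun g => U g (T Om)) (eig_bicommutant_tb_orbit _ TC'') _ e0.
have adj_Om g : adj ip (U g) Om = Om by rewrite -{1}(U_Om g) adj_unitaryK.
exists s => g; have [h [hs_h gh]] := hs g.
by exists h; rewrite !alphaE !adj_Om.
Qed.

End Represented.

End HilbertSpace.

Theorem proposition6p5 (R : realType) (H : lmodType R[i]) (ip : H -> H -> R[i])
    (G : groupType) (M : (H -> H) -> Prop) (Omega : H) (U : G -> H -> H) :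
  represented_system ip M Omega U ->
  let B := fun a => eigenoperator ip M U a \/ a = zero_op (H := H) in
  let C := gen_star_alg ip B in
  let N := commutant ip (commutant ip C) in
  [/\ (forall a, N a -> M a),
      star_subalg ip N,
      (forall g a, N a -> N (alpha ip U g a)) &
      (forall a, N a -> orbit_totally_bounded ip U Omega a)].
Proof.
move=> [[hH M_vn _ _ M_sep] [U_unitary _ _ U_Omega _]] B C N; split.
- exact: (eig_bicommutant_sub hH M_vn).
- exact: (eig_bicommutant_star_subalg hH (U := U) M_vn).
- exact: (eig_bicommutant_alpha hH M_vn U_unitary).
- exact: (eig_bicommutant_orbit_totally_bounded hH M_vn M_sep U_unitary U_Omega).
Qed.
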